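(* For $k\in\mathbb{N}\cup\{0\}$ let $Pol_k(z)=\sum_{n\in\mathbb{N}:\,\sigma_\infty(n)=k}z^n$, and let $Z=\overline{\operatorname{span}\{Pol_k:k\ge0\}}\subset A(D)$ (closure in the topology of $A(D)$). Then $Z$ is invariant under $\mathcal{F}$, and \[ \mathcal{F}Pol_0=Pol_1,\qquad \mathcal{F}Pol_1=Pol_0+Pol_2,\qquad \mathcal{F}Pol_k=Pol_{k+1}\ (k\ge2). \] Moreover, $1$ is a simple eigenvalue of $\mathcal{F}$ as an operator in $\mathcal{L}(Z)$, with eigenvector $\psi=\sum_{k=0}^\infty Pol_k=\sum_{m\in\mathbb{N},\,\sigma_\infty(m)<\infty}z^m$.
   Context: $\mathbb{N}$ denotes the positive integers. $T$ is the Collatz map $T(n)=\frac{3n+1}2$ ($n$ odd), $T(n)=\frac n2$ ($n$ even); the total stopping time $\sigma_\infty(n)$ of $n\in\mathbb{N}$ is the least $k\ge0$ with $T^k(n)=1$ ($\infty$ if none). Each $Pol_k$ is a polynomial (finitely many $n$ have $\sigma_\infty(n)=k$). $D$ is the open unit disk, $A(D)$ the holomorphic functions on $D$ with the topology of uniform convergence on compact sets, and $\mathcal{F}$ the operator on $A(D)$ given by $\mathcal{F}\big(\sum_{n\ge0}a_nz^n\big)=\sum_{n\ge0}a_nz^{2n}+\sum_{k\ge0}a_{3k+2}z^{2k+1}$. *)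

From Stdlib Require Import Reals Arith List.
From Coquelicot Require Import Coquelicot.
Open Scope R_scope.

Definition T (n : nat) : nat :=
  if Nat.even n then n / 2 else (3 * n + 1) / 2.

(* stopsAt n k  <->  n is a positive integer and sigma_infty(n) = k,
   i.e. k is the least j >= 0 with T^j(n) = 1. *)
Definition stopsAt (n k : nat) : bool :=
  (0 <? n)%nat && Nat.eqb (Nat.iter k T n) 1
  && forallb (fun j => negb (Nat.eqb (Nat.iter j T n) 1)) (seq 0 k).

Definition finiteStop (n : nat) : Prop := exists k, stopsAt n k = true.

(* Elements of A(D) are represented by their Taylor coefficient sequences
   a : nat -> C, f(z) = sum_n a n z^n. *)
Definition coeffs := nat -> C.

(* f is holomorphic on the open unit disk: its power series converges on D *)
Definition inAD (a : coeffs) : Prop :=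
  forall z : C, Cmod z < 1 -> ex_series (fun n => (a n * Cpow z n)%C).

(* sup_{|z| <= r} |f(z) - g(z)| < eps  (one seminorm ball of the topology of
   uniform convergence on compact subsets of D; closed disks of radius r < 1
   are cofinal among compacts of D). *)
Definition closeOn (r eps : R) (f g : coeffs) : Prop :=
  forall z : C, Cmod z <= r ->
    exists v : C, is_series (fun n => ((f n - g n) * Cpow z n)%C) v
                  /\ Cmod v < eps.

Definition Pol (k : nat) : coeffs :=
  fun n => if stopsAt n k then RtoC 1 else RtoC 0.

Definition inSpanPol (g : coeffs) : Prop :=
  exists (N : nat) (c : nat -> C),
    forall n, g n = sum_n (fun k => (c k * Pol k n)%C) N.

Definition inZ (f : coeffs) : Prop :=
  inAD f /\
  forall r eps : R, 0 <= r < 1 -> 0 < eps ->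
    exists g, inSpanPol g /\ closeOn r eps f g.

(* The operator F(sum a_n z^n) = sum a_n z^{2n} + sum_k a_{3k+2} z^{2k+1},
   written on coefficients: coefficient of z^{2m} is a_m, of z^{2k+1} is a_{3k+2}. *)
Definition Fop (a : coeffs) : coeffs :=
  fun n => if Nat.even n then a (Nat.div2 n) else a (3 * Nat.div2 n + 2)%nat.

Definition PolSum (N : nat) : coeffs :=
  fun n => sum_n (fun k => Pol k n) N.

From Stdlib Require Import Reals Arith List Lia Lra.
From Stdlib Require Import Classical ClassicalEpsilon FunctionalExtensionality.
From Coquelicot Require Import Coquelicot.
Open Scope R_scope.

(* On Taylor coefficients [F] is composition with the Collatz map: [(F f)_n = f_(T n)].
   Since [sigma(n) = sigma(T n) + 1] for [n >= 2] and [T 1 = 2], this gives the action of [F]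
   on the [Pol_k] and the invariance of their span.  Uniform closeness on a circle of radius
   [r] controls every coefficient (a discrete Cauchy estimate, obtained by averaging over
   roots of unity).  Hence every element of [Z] vanishes at integers of infinite stopping
   time, and since [T n <= 2 n], approximations of [f] at a radius [rho] with [rho^2 > r]
   give approximations of [F f] at radius [r], so [F Z] is contained in [Z].  A fixed point of [F] is constant
   along Collatz orbits, so it equals [g_1 psi].  If [h = F g - g] is fixed, then [h] is
   constant along orbits, while [h_1 = g_2 - g_1 = - h_2], so [h = 0]. *)

(** * Collatz map and stopping times *)

Lemma T_double m : T (2 * m) = m.
Proof.
  unfold T. rewrite Nat.even_mul, (Nat.mul_comm 2 m), Nat.div_mul; auto.
Qed.

Lemma T_double_succ m : T (2 * m + 1) = (3 * m + 2)%nat.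
Proof.
  unfold T. rewrite Nat.even_add, Nat.even_mul.
  replace (3 * (2 * m + 1) + 1)%nat with ((3 * m + 2) * 2)%nat by lia.
  rewrite Nat.div_mul; auto.
Qed.

Lemma T_le_double n : (T n <= 2 * n)%nat.
Proof.
  destruct (Nat.Even_or_Odd n) as [[m ->]|[m ->]];
    [rewrite T_double | rewrite T_double_succ]; lia.
Qed.

Lemma T_pos n : (0 < n)%nat -> (0 < T n)%nat.
Proof.
  destruct (Nat.Even_or_Odd n) as [[m ->]|[m ->]];
    [rewrite T_double | rewrite T_double_succ]; lia.
Qed.

Lemma Fop_apply (a : coeffs) n : Fop a n = a (T n).
Proof.
  unfold Fop. destruct (Nat.Even_or_Odd n) as [[m ->]|[m ->]].
  - rewrite T_double, Nat.even_mul, Nat.div2_double. reflexivity.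
  - rewrite T_double_succ, Nat.even_add, Nat.even_mul, Nat.add_1_r, Nat.div2_succ_double.
    reflexivity.
Qed.

Lemma Fop_fixed_T_invariant (g : coeffs) : Fop g = g -> forall n, g (T n) = g n.
Proof. intros HF n. rewrite <- Fop_apply, HF. reflexivity. Qed.

Lemma stopsAt_spec n k : stopsAt n k = true <->
  (0 < n)%nat /\ Nat.iter k T n = 1%nat /\ (forall j, (j < k)%nat -> Nat.iter j T n <> 1%nat).
Proof.
  unfold stopsAt. rewrite !Bool.andb_true_iff, Nat.ltb_lt, Nat.eqb_eq, forallb_forall.
  setoid_rewrite in_seq. setoid_rewrite Bool.negb_true_iff. setoid_rewrite Nat.eqb_neq.
  split.
  - intros [[Hn Hk] Hj]. repeat split; auto. intros j Hjk. apply Hj. lia.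
  - intros [Hn [Hk Hj]]. repeat split; auto. intros j Hjk. apply Hj. lia.
Qed.

Lemma stopsAt_functional n k k' : stopsAt n k = true -> stopsAt n k' = true -> k = k'.
Proof.
  rewrite !stopsAt_spec. intros [_ [Hk Hbefore]] [_ [Hk' Hbefore']].
  destruct (lt_eq_lt_dec k k') as [[Hlt|Heq]|Hlt]; auto; exfalso.
  - exact (Hbefore' k Hlt Hk).
  - exact (Hbefore k' Hlt Hk').
Qed.

Lemma stopsAt_O n : stopsAt n 0 = true <-> n = 1%nat.
Proof.
  rewrite stopsAt_spec. split.
  - intros [_ [H _]]. exact H.
  - intros ->. repeat split; auto. intros j Hj. lia.
Qed.

Lemma stopsAt_S n k : (1 < n)%nat -> stopsAt n (S k) = stopsAt (T n) k.
Proof.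
  intros Hn. apply Bool.eq_iff_eq_true. rewrite !stopsAt_spec, Nat.iter_succ_r. split.
  - intros [_ [Hk Hbefore]]. repeat split; auto using T_pos with arith.
    intros j Hj. rewrite <- Nat.iter_succ_r. apply Hbefore. lia.
  - intros [_ [Hk Hbefore]]. repeat split; auto with arith.
    intros [|j] Hj; simpl; [lia|].
    rewrite <- Nat.iter_succ, Nat.iter_succ_r. apply Hbefore. lia.
Qed.

Lemma Pol_T k n : (1 < n)%nat -> Pol k (T n) = Pol (S k) n.
Proof. intros Hn. unfold Pol. rewrite stopsAt_S; auto. Qed.

Lemma Pol_stopsAt k n j : stopsAt n j = true -> Pol k n = if (k =? j)%nat then RtoC 1 else RtoC 0.
Proof.
  intros Hj. unfold Pol. destruct (Nat.eqb_spec k j) as [->|Hkj]; rewrite ?Hj; auto.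
  destruct (stopsAt n k) eqn:Hk; auto.
  exfalso. exact (Hkj (stopsAt_functional n k j Hk Hj)).
Qed.

Lemma Fop_Pol0 : Fop (Pol 0) = Pol 1.
Proof.
  apply functional_extensionality. intros n. rewrite Fop_apply.
  destruct n as [|[|n]]; [reflexivity | reflexivity |]. apply Pol_T. lia.
Qed.

Lemma Fop_Pol1 : Fop (Pol 1) = (fun n => (Pol 0 n + Pol 2 n)%C).
Proof.
  apply functional_extensionality. intros n. rewrite Fop_apply.
  destruct n as [|[|n]]; [symmetry; apply Cplus_0_l | symmetry; apply Cplus_0_r |].
  rewrite Pol_T by lia. unfold Pol at 2.
  replace (stopsAt (S (S n)) 0) with false by (symmetry; apply Bool.not_true_iff_false;
    rewrite stopsAt_O; lia).
  symmetry. apply Cplus_0_l.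
Qed.

Lemma Fop_Pol_ge2 k : (2 <= k)%nat -> Fop (Pol k) = Pol (S k).
Proof.
  intros Hk. apply functional_extensionality. intros n. rewrite Fop_apply.
  destruct n as [|[|n]]; [reflexivity | | apply Pol_T; lia].
  change (T 1) with 2%nat.
  rewrite (Pol_stopsAt k 2 1), (Pol_stopsAt (S k) 1 0) by reflexivity.
  replace (k =? 1)%nat with false by (symmetry; apply Nat.eqb_neq; lia).
  reflexivity.
Qed.

Lemma finiteStop_T n : (0 < n)%nat -> finiteStop (T n) <-> finiteStop n.
Proof.
  intros Hn. destruct (Nat.eq_dec n 1) as [->|Hn1].
  - split; intros _; [exists 0%nat | exists 1%nat]; reflexivity.
  - split; intros [k Hk].
    + exists (S k). rewrite stopsAt_S by lia. exact Hk.
    + destruct k as [|k].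
      * apply stopsAt_O in Hk. lia.
      * exists k. rewrite <- stopsAt_S by lia. exact Hk.
Qed.

Lemma not_finiteStop_T n : ~ finiteStop n -> ~ finiteStop (T n).
Proof.
  intros Hn. destruct n as [|n]; [exact Hn|]. rewrite finiteStop_T by lia. exact Hn.
Qed.

Lemma not_finiteStop_stopsAt n k : ~ finiteStop n -> stopsAt n k = false.
Proof. intros Hn. apply Bool.not_true_iff_false. intros Hk. apply Hn. exists k. exact Hk. Qed.

Lemma stopsAt_S_gt1 n j : stopsAt n (S j) = true -> (1 < n)%nat.
Proof.
  intros Hj. destruct n as [|[|n]]; [discriminate | | lia].
  discriminate (stopsAt_functional 1 (S j) 0 Hj eq_refl).
Qed.

Lemma T_invariant_finiteStop {A : Type} (g : nat -> A) :
  (forall n, g (T n) = g n) -> forall n, finiteStop n -> g n = g 1%nat.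
Proof.
  intros Hg n [k Hk]. apply stopsAt_spec in Hk as [_ [Hk _]].
  rewrite <- Hk. clear Hk. induction k as [|k IH]; simpl; auto. rewrite Hg. exact IH.
Qed.

Lemma sum_n_indicator (x : C) j N :
  sum_n (fun k => if (k =? j)%nat then x else RtoC 0) N = if (j <=? N)%nat then x else RtoC 0.
Proof.
  induction N as [|N IH].
  - rewrite sum_O. destruct j; reflexivity.
  - rewrite sum_Sn, IH. change plus with Cplus.
    destruct (Nat.eqb_spec (S N) j) as [<-|Hne].
    + rewrite Nat.leb_refl, (proj2 (Nat.leb_gt (S N) N)) by lia. apply Cplus_0_l.
    + rewrite Cplus_0_r. destruct (Nat.leb_spec j N); destruct (Nat.leb_spec j (S N)); auto; lia.
Qed.

Lemma sum_Pol_stopsAt (c : nat -> C) N n j : stopsAt n j = true ->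
  sum_n (fun k => (c k * Pol k n)%C) N = if (j <=? N)%nat then c j else RtoC 0.
Proof.
  intros Hj. rewrite <- sum_n_indicator. apply sum_n_ext. intros k.
  rewrite (Pol_stopsAt k n j Hj). destruct (Nat.eqb_spec k j) as [->|_].
  - apply Cmult_1_r.
  - apply Cmult_0_r.
Qed.

Lemma sum_Pol_not_finiteStop (c : nat -> C) N n : ~ finiteStop n ->
  sum_n (fun k => (c k * Pol k n)%C) N = RtoC 0.
Proof.
  intros Hn. unfold sum_n. etransitivity; [| apply (@sum_n_m_const_zero C_AbelianMonoid 0 N)].
  apply sum_n_m_ext. intros k.
  unfold Pol. rewrite not_finiteStop_stopsAt by exact Hn. apply Cmult_0_r.
Qed.

Lemma span_not_finiteStop g n : inSpanPol g -> ~ finiteStop n -> g n = RtoC 0.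
Proof. intros [N [c Hg]] Hn. rewrite Hg. apply sum_Pol_not_finiteStop, Hn. Qed.

Lemma finite_upper_bound (f : nat -> R) N : exists K, 0 <= K /\ forall j, (j <= N)%nat -> f j <= K.
Proof.
  induction N as [|N [K [HK0 HK]]].
  - exists (Rmax 0 (f 0%nat)). split; [apply Rmax_l|].
    intros j Hj. replace j with 0%nat by lia. apply Rmax_r.
  - exists (Rmax K (f (S N))). split; [eapply Rle_trans; [exact HK0 | apply Rmax_l]|].
    intros j Hj. destruct (Nat.eq_dec j (S N)) as [->|Hne]; [apply Rmax_r|].
    eapply Rle_trans; [apply HK; lia | apply Rmax_l].
Qed.

Lemma span_coef_bounded g : inSpanPol g -> exists K, forall n, Cmod (g n) <= K.
Proof.
  intros [N [c Hg]]. destruct (finite_upper_bound (fun k => Cmod (c k)) N) as [K [HK0 HK]].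
  exists K. intros n. rewrite Hg.
  destruct (classic (finiteStop n)) as [[j Hj]|Hn].
  - rewrite (sum_Pol_stopsAt c N n j Hj).
    destruct (Nat.leb_spec j N); [apply HK; lia | rewrite Cmod_0; exact HK0].
  - rewrite sum_Pol_not_finiteStop, Cmod_0 by exact Hn. exact HK0.
Qed.

Lemma span_Fop g : inSpanPol g -> inSpanPol (Fop g).
Proof.
  intros [N [c Hg]].
  set (ct := fun j => if (j <=? N)%nat then c j else RtoC 0).
  exists (S N), (fun k => match k with 0%nat => ct 1%nat | S j => ct j end).
  intros n. rewrite Fop_apply, Hg.
  destruct (classic (finiteStop n)) as [[[|j] Hj]|Hn].
  - apply stopsAt_O in Hj as ->. change (T 1) with 2%nat.
    rewrite (sum_Pol_stopsAt _ _ 2 1), (sum_Pol_stopsAt _ _ 1 0) by reflexivity. reflexivity.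
  - pose proof (stopsAt_S_gt1 n j Hj) as Hn.
    rewrite (sum_Pol_stopsAt _ _ (T n) j), (sum_Pol_stopsAt _ _ n (S j) Hj)
      by (rewrite <- stopsAt_S; auto).
    simpl (S j <=? S N). unfold ct. destruct (j <=? N)%nat; reflexivity.
  - rewrite !sum_Pol_not_finiteStop; auto using not_finiteStop_T.
Qed.

(** * Coefficient bounds and power series *)

Lemma pow_le_pow_ge (x : R) m n : 0 <= x <= 1 -> (m <= n)%nat -> x ^ n <= x ^ m.
Proof.
  intros Hx Hmn. replace n with (m + (n - m))%nat by lia. rewrite pow_add.
  assert (x ^ (n - m) <= 1) by (rewrite <- (pow1 (n - m)); apply pow_incr; lra).
  pose proof (pow_le x m (proj1 Hx)). nra.
Qed.

Lemma pow_le_mul_pow (q s : R) M l : 0 <= q <= s * s -> 0 <= s <= 1 -> (M <= l)%nat ->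
  q ^ l <= s ^ M * s ^ l.
Proof.
  intros Hq Hs Hl. apply Rle_trans with (s ^ l * s ^ l).
  - rewrite <- Rpow_mult_distr. apply pow_incr. exact Hq.
  - apply Rmult_le_compat_r; [apply pow_le; lra | apply pow_le_pow_ge; auto].
Qed.

Lemma pow_sqr_le_pow_T (rho : R) n : 0 <= rho <= 1 -> (rho * rho) ^ n <= rho ^ T n.
Proof.
  intros Hrho. replace ((rho * rho) ^ n) with (rho ^ (2 * n)) by (rewrite pow_mult; f_equal; ring).
  apply pow_le_pow_ge; [exact Hrho | apply T_le_double].
Qed.

Lemma is_series_geom_scal (K q : R) : 0 <= q < 1 -> is_series (fun n => K * q ^ n) (K / (1 - q)).
Proof.
  intros Hq. apply (is_series_ext (fun n => scal K (q ^ n))); [reflexivity|].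
  apply (@is_series_scal R_AbsRing R_NormedModule), is_series_geom.
  rewrite Rabs_pos_eq; lra.
Qed.

Lemma is_series_geom_bound (a : nat -> C) (v : C) (K q : R) : 0 <= q < 1 ->
  (forall n, Cmod (a n) <= K * q ^ n) -> is_series a v -> Cmod v <= K / (1 - q).
Proof.
  intros Hq Ha Hv. change (Rbar_le (norm v) (K / (1 - q))).
  eapply is_lim_seq_le;
    [| eapply filterlim_comp; [exact Hv | apply filterlim_norm]
     | exact (is_series_geom_scal K q Hq)].
  intros n. eapply Rle_trans; [apply norm_sum_n_m | apply sum_n_m_le; exact Ha].
Qed.

Lemma series_geom_bound (a : nat -> C) (K q : R) : 0 <= q < 1 ->
  (forall n, Cmod (a n) <= K * q ^ n) -> exists v, is_series a v /\ Cmod v <= K / (1 - q).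
Proof.
  intros Hq Ha.
  destruct (@ex_series_le C_AbsRing C_CompleteNormedModule a _ Ha
              (ex_intro _ _ (is_series_geom_scal K q Hq))) as [v Hv].
  exists v. split; [exact Hv | exact (is_series_geom_bound a v K q Hq Ha Hv)].
Qed.

Lemma power_series_geom_bound (h : coeffs) (r K q : R) (z : C) : 0 <= q < 1 ->
  (forall n, Cmod (h n) * r ^ n <= K * q ^ n) -> Cmod z <= r ->
  exists v, is_series (fun n => (h n * Cpow z n)%C) v /\ Cmod v <= K / (1 - q).
Proof.
  intros Hq Hh Hz. apply series_geom_bound; [exact Hq|]. intros n.
  rewrite Cmod_mult, Cmod_pow. eapply Rle_trans; [|apply Hh].
  apply Rmult_le_compat_l; [apply Cmod_ge_0|]. apply pow_incr. split; [apply Cmod_ge_0 | exact Hz].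
Qed.

Definition coef_bounded (f : coeffs) (r : R) : Prop :=
  exists B, forall n, Cmod (f n) * r ^ n <= B.

Lemma coef_bounded_le f r rho : 0 <= r <= rho -> coef_bounded f rho -> coef_bounded f r.
Proof.
  intros Hr [B HB]. exists B. intros n. eapply Rle_trans; [|apply HB].
  apply Rmult_le_compat_l; [apply Cmod_ge_0 | apply pow_incr; exact Hr].
Qed.

Lemma coef_bounded_geom f r rho : 0 <= r < rho -> coef_bounded f rho ->
  exists B q, 0 <= B /\ 0 <= q < 1 /\ forall n, Cmod (f n) * r ^ n <= B * q ^ n.
Proof.
  intros Hr [B HB]. exists B, (r / rho). split; [|split].
  - specialize (HB 0%nat). pose proof (Cmod_ge_0 (f 0%nat)). simpl in HB. lra.
  - split; [apply Rdiv_le_0_compat; lra | apply (Rdiv_lt_1 r rho); lra].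
  - intros n. replace (r ^ n) with (rho ^ n * (r / rho) ^ n)
      by (rewrite <- Rpow_mult_distr; f_equal; field; lra).
    rewrite <- Rmult_assoc. apply Rmult_le_compat_r; [|apply HB].
    apply pow_le, Rdiv_le_0_compat; lra.
Qed.

Lemma coef_bounded_of_bounded f K r : (forall n, Cmod (f n) <= K) -> 0 <= r <= 1 ->
  coef_bounded f r.
Proof.
  intros HK Hr. exists K. intros n.
  assert (r ^ n <= 1) by (rewrite <- (pow1 n); apply pow_incr; lra).
  pose proof (pow_le r n (proj1 Hr)). pose proof (HK n). pose proof (Cmod_ge_0 (f n)). nra.
Qed.

Lemma coef_bounded_sub f g r : 0 <= r -> coef_bounded f r -> coef_bounded g r ->
  coef_bounded (fun n => (f n - g n)%C) r.
Proof.
  intros Hr [B1 H1] [B2 H2]. exists (B1 + B2). intros n.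
  assert (Cmod (f n - g n) <= Cmod (f n) + Cmod (g n))
    by (rewrite <- (Cmod_opp (g n)); apply Cmod_triangle).
  pose proof (pow_le r n Hr). pose proof (H1 n). pose proof (H2 n). nra.
Qed.

Lemma coef_bounded_Fop f rho : 0 <= rho <= 1 -> coef_bounded f rho ->
  coef_bounded (Fop f) (rho * rho).
Proof.
  intros Hrho [B HB]. exists B. intros n. rewrite Fop_apply.
  eapply Rle_trans; [|apply (HB (T n))].
  apply Rmult_le_compat_l; [apply Cmod_ge_0 | apply pow_sqr_le_pow_T, Hrho].
Qed.

Lemma ex_series_terms_bounded (a : nat -> C) : ex_series a -> exists B, forall n, Cmod (a n) <= B.
Proof.
  intros Ha.
  destruct (@Cauchy_ex_series C_AbsRing C_CompleteNormedModule a Ha (mkposreal 1 Rlt_0_1))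
    as [N HN].
  destruct (finite_upper_bound (fun n => Cmod (a n)) N) as [K [_ HK]].
  exists (Rmax K 1). intros n. destruct (Nat.le_gt_cases n N) as [Hn|Hn].
  - eapply Rle_trans; [apply HK, Hn | apply Rmax_l].
  - specialize (HN n n ltac:(lia) ltac:(lia)). simpl in HN. rewrite sum_n_n in HN.
    eapply Rle_trans; [left; exact HN | apply Rmax_r].
Qed.

Lemma inAD_coef_bounded f r : inAD f -> 0 <= r < 1 -> coef_bounded f r.
Proof.
  intros Hf Hr.
  destruct (ex_series_terms_bounded _ (Hf (RtoC r) ltac:(rewrite Cmod_R, Rabs_pos_eq; lra)))
    as [B HB].
  exists B. intros n. specialize (HB n).
  rewrite Cmod_mult, Cmod_pow, Cmod_R, Rabs_pos_eq in HB by lra. exact HB.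
Qed.

Lemma coef_bounded_inAD f : (forall r, 0 <= r < 1 -> coef_bounded f r) -> inAD f.
Proof.
  intros Hf z Hz. pose proof (Cmod_ge_0 z). set (rho := (1 + Cmod z) / 2).
  destruct (coef_bounded_geom f (Cmod z) rho) as [B [q [_ [Hq HB]]]];
    [unfold rho; lra | apply Hf; unfold rho; lra |].
  destruct (power_series_geom_bound f (Cmod z) B q z Hq HB (Rle_refl _)) as [v [Hv _]].
  exists v. exact Hv.
Qed.

Lemma inAD_Fop f : inAD f -> inAD (Fop f).
Proof.
  intros Hf. apply coef_bounded_inAD. intros r Hr. set (rho := (1 + r) / 2).
  apply (coef_bounded_le _ r (rho * rho)); [unfold rho; nra|].
  apply coef_bounded_Fop; [unfold rho; lra|].
  apply inAD_coef_bounded; [exact Hf | unfold rho; lra].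
Qed.

(** * Roots of unity and the Cauchy estimate *)

Lemma Cpow_cis (th : R) k : Cpow (cos th, sin th) k = (cos (INR k * th), sin (INR k * th)).
Proof.
  induction k as [|k IH].
  - simpl. rewrite Rmult_0_l, cos_0, sin_0. reflexivity.
  - rewrite Cpow_S, IH, S_INR. unfold Cmult. simpl.
    replace ((INR k + 1) * th) with (INR k * th + th) by ring.
    rewrite cos_plus, sin_plus. f_equal; ring.
Qed.

Lemma Cmod_cis (th : R) : Cmod (cos th, sin th) = 1.
Proof.
  unfold Cmod. simpl. pose proof (sin2_cos2 th) as H. unfold Rsqr in H.
  replace (cos th * (cos th * 1) + sin th * (sin th * 1)) with 1 by lra. apply sqrt_1.
Qed.

Lemma sum_n_geom_C (x : C) N : ((x - 1) * sum_n (fun j => Cpow x j) N = Cpow x (S N) - 1)%C.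
Proof.
  induction N as [|N IH].
  - rewrite sum_O. simpl. ring.
  - rewrite sum_Sn. change plus with Cplus. rewrite Cmult_plus_distr_l, IH, !Cpow_S. ring.
Qed.

Lemma sum_n_one_C N : sum_n (fun _ => RtoC 1) N = RtoC (INR (S N)).
Proof.
  induction N as [|N IH].
  - rewrite sum_O. reflexivity.
  - rewrite sum_Sn, IH, (S_INR (S N)), RtoC_plus. reflexivity.
Qed.

Lemma Cmod_sum_n_le (a : nat -> C) (e : R) N :
  (forall j, Cmod (a j) <= e) -> Cmod (sum_n a N) <= INR (S N) * e.
Proof.
  intros Ha. eapply Rle_trans; [apply (@norm_sum_n_m C_AbsRing C_NormedModule)|].
  eapply Rle_trans; [apply (sum_n_m_le _ (fun _ => e)); exact Ha|].
  rewrite sum_n_m_const, Nat.sub_0_r. apply Rle_refl.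
Qed.

Lemma is_series_sum_n (a : nat -> nat -> C) (w : nat -> C) N :
  (forall j, is_series (a j) (w j)) -> is_series (fun l => sum_n (fun j => a j l) N) (sum_n w N).
Proof.
  intros Ha. induction N as [|N IH].
  - rewrite sum_O. apply (is_series_ext (a 0%nat)); [|apply Ha].
    intros l. rewrite sum_O. reflexivity.
  - rewrite sum_Sn.
    apply (is_series_ext (fun l => plus (sum_n (fun j => a j l) N) (a (S N) l))).
    { intros l. rewrite sum_Sn. reflexivity. }
    apply (@is_series_plus C_AbsRing C_NormedModule); auto.
Qed.

Lemma is_series_indicator (x : C) m : is_series (fun l => if (l =? m)%nat then x else RtoC 0) x.
Proof.
  apply filterlim_ext_loc with (fun _ => x); [|apply filterlim_const].
  exists m. intros n Hn. rewrite sum_n_indicator, (proj2 (Nat.leb_le m n) Hn). reflexivity.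
Qed.

Lemma is_series_remove_term (a : nat -> C) (A : C) m : is_series a A ->
  is_series (fun l => if (l =? m)%nat then RtoC 0 else a l) (A - a m)%C.
Proof.
  intros Ha.
  apply (is_series_ext (fun l => plus (a l) (opp (if (l =? m)%nat then a m else RtoC 0)))).
  - intros l. unfold plus, opp. simpl. destruct (Nat.eqb_spec l m) as [->|_]; ring.
  - apply (@is_series_minus C_AbsRing C_NormedModule); [exact Ha | apply is_series_indicator].
Qed.

Lemma mod_shift_eq0_ge M m l : (m < M)%nat -> ((l + (M - m)) mod M = 0)%nat -> l <> m ->
  (M <= l)%nat.
Proof.
  intros Hm Hmod Hl. apply Nat.Div0.mod_divides in Hmod as [c Hc].
  destruct c as [|[|c]]; lia.
Qed.

Section RootsOfUnity.

Variable M : nat.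
Hypothesis M_pos : (0 < M)%nat.

Let omega : C := (cos (2 * PI / INR M), sin (2 * PI / INR M)).

Let INR_M_pos : 0 < INR M := lt_0_INR M M_pos.

Lemma Cmod_omega_pow k : Cmod (Cpow omega k) = 1.
Proof. rewrite Cmod_pow. unfold omega. rewrite Cmod_cis. apply pow1. Qed.

Lemma omega_pow_M : Cpow omega M = RtoC 1.
Proof.
  unfold omega. rewrite Cpow_cis. pose proof INR_M_pos.
  replace (INR M * (2 * PI / INR M)) with (2 * PI) by (field; lra).
  rewrite cos_2PI, sin_2PI. reflexivity.
Qed.

Lemma omega_pow_mod k : Cpow omega k = Cpow omega (k mod M).
Proof.
  rewrite (Nat.div_mod_eq k M) at 1.
  rewrite Cpow_add_r, Cpow_mult_r, omega_pow_M, Cpow_1_l. ring.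
Qed.

Lemma omega_pow_eq1 k : Cpow omega k = RtoC 1 -> (k mod M = 0)%nat.
Proof.
  rewrite omega_pow_mod. unfold omega. rewrite Cpow_cis. intros Hk. injection Hk as Hcos Hsin.
  set (t := (k mod M)%nat) in *.
  assert (Ht : (t < M)%nat) by (apply Nat.mod_upper_bound; lia).
  destruct (Nat.eq_dec t 0) as [|Ht0]; [assumption | exfalso].
  pose proof INR_M_pos. pose proof PI_RGT_0.
  assert (INR t < INR M) by (apply lt_INR, Ht).
  assert (1 <= INR t) by (apply (le_INR 1); lia).
  assert (Hangle : INR t * (2 * PI / INR M) < 2 * PI).
  { replace (2 * PI) with (INR M * (2 * PI / INR M)) at 2 by (field; lra).
    apply Rmult_lt_compat_r; [apply Rdiv_lt_0_compat|]; lra. }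
  assert (0 < INR t * (2 * PI / INR M))
    by (apply Rmult_lt_0_compat; [|apply Rdiv_lt_0_compat]; lra).
  destruct (sin_eq_O_2PI_0 (INR t * (2 * PI / INR M)) ltac:(lra) ltac:(lra) Hsin)
    as [E|[E|E]]; try lra.
  rewrite E, cos_PI in Hcos. lra.
Qed.

Lemma sum_omega_pow k : sum_n (fun j => Cpow (Cpow omega k) j) (pred M) =
  if (k mod M =? 0)%nat then RtoC (INR M) else RtoC 0.
Proof.
  destruct (Nat.eqb_spec (k mod M) 0) as [Hk|Hk].
  - rewrite omega_pow_mod, Hk, (sum_n_ext _ (fun _ => RtoC 1)) by (intros; apply Cpow_1_l).
    rewrite sum_n_one_C, Nat.succ_pred_pos by exact M_pos. reflexivity.
  - assert (Hne : (Cpow omega k - 1)%C <> RtoC 0).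
    { intros H0. apply Hk, omega_pow_eq1. apply Ceq_minus, H0. }
    pose proof (sum_n_geom_C (Cpow omega k) (pred M)) as Hgeom.
    rewrite Nat.succ_pred_pos, <- Cpow_mult_r, Nat.mul_comm, Cpow_mult_r, omega_pow_M, Cpow_1_l
      in Hgeom by exact M_pos.
    set (S := sum_n (fun j => Cpow (Cpow omega k) j) (pred M)) in *.
    replace S with (/ (Cpow omega k - 1) * ((Cpow omega k - 1) * S))%C by (field; exact Hne).
    rewrite Hgeom. change (@eq C (/ (Cpow omega k - 1) * (1 - 1))%C 0). ring.
Qed.

Lemma is_series_root_filter (h : coeffs) (r : R) d (v : nat -> C) :
  (forall j, is_series (fun l => (h l * Cpow (RtoC r * Cpow omega j) l)%C) (v j)) ->
  is_series (fun l => if ((l + d) mod M =? 0)%nat then (h l * RtoC (r ^ l))%C else RtoC 0)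
    (/ RtoC (INR M) * sum_n (fun j => Cpow omega (j * d) * v j) (pred M))%C.
Proof.
  intros Hv.
  assert (HM : RtoC (INR M) <> RtoC 0) by (intros E; injection E; pose proof INR_M_pos; lra).
  apply (is_series_ext (fun l => / RtoC (INR M) *
    sum_n (fun j => Cpow omega (j * d) * (h l * Cpow (RtoC r * Cpow omega j) l)) (pred M))%C).
  - intros l.
    transitivity (/ RtoC (INR M) *
      (h l * RtoC (r ^ l) * sum_n (fun j => Cpow (Cpow omega (l + d)) j) (pred M)))%C.
    + f_equal. rewrite <- (@sum_n_mult_l C_Ring). apply sum_n_ext. intros j.
      rewrite Cpow_mult_l, <- RtoC_pow, <- !Cpow_mult_r.
      replace ((l + d) * j)%nat with (j * d + j * l)%nat by ring.
      rewrite Cpow_add_r. change mult with Cmult. simpl. ring.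
    + rewrite sum_omega_pow. match goal with |- ?a = ?b => change (@eq C a b) end.
      destruct ((l + d) mod M =? 0)%nat; field; exact HM.
  - apply (@is_series_scal C_AbsRing C_NormedModule).
    apply is_series_sum_n. intros j. apply (@is_series_scal C_AbsRing C_NormedModule), Hv.
Qed.

Lemma Cmod_root_average_le (v : nat -> C) (e : R) d : (forall j, Cmod (v j) <= e) ->
  Cmod (/ RtoC (INR M) * sum_n (fun j => Cpow omega (j * d) * v j) (pred M))%C <= e.
Proof.
  intros Hv. rewrite Cmod_mult, Cmod_inv, Cmod_R, Rabs_pos_eq
    by (lra || (intros E; injection E; lra)).
  apply (Rmult_le_reg_l (INR M)); [lra|]. rewrite <- Rmult_assoc, Rinv_r, Rmult_1_l by lra.
  replace (INR M) with (INR (S (pred M))) by (rewrite Nat.succ_pred_pos; auto).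
  apply Cmod_sum_n_le. intros j. rewrite Cmod_mult, Cmod_omega_pow, Rmult_1_l. apply Hv.
Qed.

Lemma coef_root_filter_bound (h : coeffs) (r e B q s : R) m :
  (m < M)%nat -> 0 < r -> 0 <= q <= s * s -> 0 <= s < 1 ->
  (forall l, Cmod (h l) * r ^ l <= B * q ^ l) ->
  (forall z, Cmod z <= r -> exists v, is_series (fun l => (h l * Cpow z l)%C) v /\ Cmod v < e) ->
  Cmod (h m) * r ^ m <= e + B * s ^ M / (1 - s).
Proof.
  intros Hm Hr Hq Hs Hh Hclose. pose proof INR_M_pos.
  destruct (choice (fun j v =>
    is_series (fun l => (h l * Cpow (RtoC r * Cpow omega j) l)%C) v /\ Cmod v < e)) as [v Hv].
  { intros j. apply Hclose. rewrite Cmod_mult, Cmod_omega_pow, Cmod_R, Rabs_pos_eq; lra. }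
  set (d := (M - m)%nat).
  set (b := fun l => if ((l + d) mod M =? 0)%nat then (h l * RtoC (r ^ l))%C else RtoC 0).
  set (A := (/ RtoC (INR M) * sum_n (fun j => Cpow omega (j * d) * v j) (pred M))%C).
  assert (Hb : is_series b A) by (apply is_series_root_filter; intros j; apply Hv).
  assert (HA : Cmod A <= e) by (apply Cmod_root_average_le; intros j; left; apply Hv).
  assert (Hbm : Cmod (b m) = Cmod (h m) * r ^ m).
  { unfold b. replace ((m + d) mod M)%nat with 0%nat
      by (unfold d; rewrite Nat.add_comm, Nat.sub_add by lia; symmetry; apply Nat.Div0.mod_same).
    simpl. rewrite Cmod_mult, Cmod_R, Rabs_pos_eq; [reflexivity | apply pow_le; lra]. }
  assert (HB : 0 <= B).
  { specialize (Hh 0%nat). pose proof (Cmod_ge_0 (h 0%nat)). simpl in Hh. lra. }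
  assert (Htail : Cmod (A - b m) <= B * s ^ M / (1 - s)).
  { apply (is_series_geom_bound (fun l => if (l =? m)%nat then RtoC 0 else b l) _ _ s Hs);
      [|apply is_series_remove_term, Hb].
    intros l. assert (0 <= B * s ^ M * s ^ l) by (pose proof (pow_le s M); pose proof (pow_le s l);
      apply Rmult_le_pos; [apply Rmult_le_pos|]; lra).
    destruct (Nat.eqb_spec l m) as [->|Hlm]; [rewrite Cmod_0; lra|].
    unfold b. destruct (Nat.eqb_spec ((l + d) mod M) 0) as [Hmod|_]; [|rewrite Cmod_0; lra].
    rewrite Cmod_mult, Cmod_R, Rabs_pos_eq by (apply pow_le; lra).
    eapply Rle_trans; [apply Hh|]. rewrite Rmult_assoc. apply Rmult_le_compat_l; [exact HB|].
    apply pow_le_mul_pow; [exact Hq | lra | apply (mod_shift_eq0_ge M m l); auto]. }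
  rewrite <- Hbm. replace (b m) with (A + - (A - b m))%C by ring.
  eapply Rle_trans; [apply Cmod_triangle|]. rewrite Cmod_opp. lra.
Qed.

End RootsOfUnity.

(* A substitute for Cauchy's integral formula: averaging over the [M]-th roots of unity
   isolates the coefficients of index congruent to [m] mod [M]; all of them except the
   [m]-th have index at least [M], so their contribution vanishes as [M] grows. *)
Lemma closeOn_coef_le (f g : coeffs) (r rho e : R) : 0 < r < rho ->
  coef_bounded (fun n => (f n - g n)%C) rho -> closeOn r e f g ->
  forall m, Cmod (f m - g m) * r ^ m <= e.
Proof.
  intros Hr Hb Hclose m.
  destruct (coef_bounded_geom (fun n => (f n - g n)%C) r rho) as [B [q [HB [Hq Hh]]]];
    [lra | exact Hb |].
  set (s := (1 + q) / 2). assert (Hs : 0 <= s < 1) by (unfold s; lra).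
  apply Rnot_lt_le. intros Hlt. set (x := Cmod (f m - g m) * r ^ m) in *.
  destruct (pow_lt_1_zero s ltac:(rewrite Rabs_pos_eq; lra) ((x - e) * (1 - s) / (B + 1)))
    as [N HN].
  { apply Rdiv_lt_0_compat; [apply Rmult_lt_0_compat|]; lra. }
  pose proof (coef_root_filter_bound (S (N + m)) ltac:(lia) (fun n => (f n - g n)%C)
    r e B q s m ltac:(lia) ltac:(lra) ltac:(unfold s; nra) Hs Hh Hclose) as Hfilter.
  cbv beta in Hfilter. fold x in Hfilter.
  specialize (HN (S (N + m)) ltac:(lia)). rewrite Rabs_pos_eq in HN by (apply pow_le; lra).
  set (t := s ^ S (N + m)) in *. assert (0 <= t) by (apply pow_le; lra).
  assert (Hsmall : (B + 1) * t < (x - e) * (1 - s)).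
  { replace ((x - e) * (1 - s)) with ((B + 1) * ((x - e) * (1 - s) / (B + 1))) by (field; lra).
    apply Rmult_lt_compat_l; lra. }
  assert (B * t / (1 - s) < x - e).
  { apply (Rmult_lt_reg_r (1 - s)); [lra|]. unfold Rdiv.
    rewrite Rmult_assoc, Rinv_l, Rmult_1_r by lra. nra. }
  lra.
Qed.

(** * The closed span Z and the eigenvector psi *)

Lemma span_coef_bounded_at g r : inSpanPol g -> 0 <= r <= 1 -> coef_bounded g r.
Proof.
  intros Hg Hr. destruct (span_coef_bounded g Hg) as [K HK].
  exact (coef_bounded_of_bounded g K r HK Hr).
Qed.

Lemma inZ_not_finiteStop g n : inZ g -> ~ finiteStop n -> g n = RtoC 0.
Proof.
  intros [Hg Happrox] Hn. apply Cmod_eq_0.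
  assert (Hpow : 0 < (1 / 2) ^ n) by (apply pow_lt; lra).
  enough (Cmod (g n) * (1 / 2) ^ n <= 0) by (pose proof (Cmod_ge_0 (g n)); nra).
  apply le_epsilon. intros e He. rewrite Rplus_0_l.
  destruct (Happrox (1 / 2) e ltac:(lra) He) as [g' [Hg' Hclose]].
  pose proof (closeOn_coef_le g g' (1 / 2) (3 / 4) e ltac:(lra)
    (coef_bounded_sub g g' (3 / 4) ltac:(lra) (inAD_coef_bounded g (3 / 4) Hg ltac:(lra))
       (span_coef_bounded_at g' (3 / 4) Hg' ltac:(lra))) Hclose n) as Hcoef.
  rewrite (span_not_finiteStop g' n Hg' Hn) in Hcoef.
  replace (g n - RtoC 0)%C with (g n) in Hcoef by ring. exact Hcoef.
Qed.

Lemma inZ_Fop f : inZ f -> inZ (Fop f).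
Proof.
  intros [Hf Happrox]. split; [apply inAD_Fop, Hf|]. intros r eps Hr Heps.
  set (rho := (1 + r) / 2). assert (Hrho : 0 < rho < 1) by (unfold rho; lra).
  assert (Hr2 : r < rho * rho) by (unfold rho; nra).
  set (q := r / (rho * rho)).
  assert (Hq : 0 <= q < 1)
    by (split; [apply Rdiv_le_0_compat | apply (Rdiv_lt_1 r (rho * rho))]; nra).
  set (e := eps * (1 - q) / 2). assert (He : 0 < e) by (apply Rdiv_lt_0_compat; nra).
  destruct (Happrox rho e ltac:(lra) He) as [g [Hg Hclose]].
  exists (Fop g). split; [apply span_Fop, Hg|].
  assert (Hcoef : forall m, Cmod (f m - g m) * rho ^ m <= e).
  { apply (closeOn_coef_le f g rho ((1 + rho) / 2) e); [lra| |exact Hclose].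
    apply coef_bounded_sub; [lra | apply inAD_coef_bounded; [exact Hf | lra] |].
    apply span_coef_bounded_at; [exact Hg | lra]. }
  intros z Hz.
  destruct (power_series_geom_bound (fun n => (Fop f n - Fop g n)%C) r e q z Hq) as [v [Hv Hvb]];
    [| exact Hz |].
  - intros n. rewrite !Fop_apply.
    replace (r ^ n) with ((rho * rho) ^ n * q ^ n)
      by (rewrite <- Rpow_mult_distr; f_equal; unfold q; field; lra).
    rewrite <- Rmult_assoc. apply Rmult_le_compat_r; [apply pow_le; lra|].
    eapply Rle_trans; [|apply (Hcoef (T n))].
    apply Rmult_le_compat_l; [apply Cmod_ge_0 | apply pow_sqr_le_pow_T; lra].
  - exists v. split; [exact Hv|]. eapply Rle_lt_trans; [exact Hvb|].
    unfold e. replace (eps * (1 - q) / 2 / (1 - q)) with (eps / 2) by (field; lra). lra.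
Qed.

Definition psi : coeffs :=
  fun n => if excluded_middle_informative (finiteStop n) then RtoC 1 else RtoC 0.

Lemma psi_finiteStop m : finiteStop m -> psi m = RtoC 1.
Proof. intros H. unfold psi. destruct (excluded_middle_informative (finiteStop m)); tauto. Qed.

Lemma psi_not_finiteStop m : ~ finiteStop m -> psi m = RtoC 0.
Proof. intros H. unfold psi. destruct (excluded_middle_informative (finiteStop m)); tauto. Qed.

Lemma Fop_psi : Fop psi = psi.
Proof.
  apply functional_extensionality. intros n. rewrite Fop_apply.
  destruct n as [|n]; [reflexivity|]. pose proof (finiteStop_T (S n) ltac:(lia)) as Hiff.
  unfold psi. destruct (excluded_middle_informative (finiteStop (T (S n))));
    destruct (excluded_middle_informative (finiteStop (S n))); tauto.
Qed.

Lemma psi_neq0 : psi <> (fun _ => RtoC 0).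
Proof.
  intros H. assert (E : psi 1%nat = RtoC 0) by (rewrite H; reflexivity).
  rewrite psi_finiteStop in E by (exists 0%nat; reflexivity).
  injection E. lra.
Qed.

Lemma PolSum_sum_Pol N n : PolSum N n = sum_n (fun k => (RtoC 1 * Pol k n)%C) N.
Proof. apply sum_n_ext. intros k. symmetry. apply Cmult_1_l. Qed.

Lemma PolSum_stopsAt N n j : stopsAt n j = true ->
  PolSum N n = if (j <=? N)%nat then RtoC 1 else RtoC 0.
Proof. intros Hj. rewrite PolSum_sum_Pol. exact (sum_Pol_stopsAt _ N n j Hj). Qed.

Lemma PolSum_not_finiteStop N n : ~ finiteStop n -> PolSum N n = RtoC 0.
Proof. intros Hn. rewrite PolSum_sum_Pol. exact (sum_Pol_not_finiteStop _ N n Hn). Qed.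

Lemma span_PolSum N : inSpanPol (PolSum N).
Proof. exists N, (fun _ => RtoC 1). apply PolSum_sum_Pol. Qed.

Lemma psi_sub_PolSum_eq0 N n : (forall j, stopsAt n j = true -> (j <= N)%nat) ->
  (psi n - PolSum N n)%C = RtoC 0.
Proof.
  intros HN. destruct (classic (finiteStop n)) as [[j Hj]|Hn].
  - rewrite psi_finiteStop, (PolSum_stopsAt N n j Hj), (proj2 (Nat.leb_le j N) (HN j Hj))
      by (exists j; exact Hj).
    ring.
  - rewrite psi_not_finiteStop, PolSum_not_finiteStop by exact Hn. ring.
Qed.

Lemma psi_sub_PolSum_le1 N n : Cmod (psi n - PolSum N n) <= 1.
Proof.
  destruct (classic (finiteStop n)) as [[j Hj]|Hn].
  - rewrite psi_finiteStop, (PolSum_stopsAt N n j Hj) by (exists j; exact Hj).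
    destruct (j <=? N)%nat.
    + replace (RtoC 1 - RtoC 1)%C with (RtoC 0) by ring. rewrite Cmod_0. lra.
    + replace (RtoC 1 - RtoC 0)%C with (RtoC 1) by ring. rewrite Cmod_1. lra.
  - rewrite psi_not_finiteStop, PolSum_not_finiteStop by exact Hn.
    replace (RtoC 0 - RtoC 0)%C with (RtoC 0) by ring. rewrite Cmod_0. lra.
Qed.

Lemma stopping_times_bounded n0 :
  exists N0, forall n j, (n < n0)%nat -> stopsAt n j = true -> (j <= N0)%nat.
Proof.
  induction n0 as [|n0 [N0 HN0]]; [exists 0%nat; intros; lia|].
  destruct (classic (finiteStop n0)) as [[j Hj]|Hn0].
  - exists (Nat.max N0 j). intros n k Hn Hk. destruct (Nat.eq_dec n n0) as [->|Hne].
    + rewrite (stopsAt_functional n0 k j Hk Hj). lia.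
    + specialize (HN0 n k ltac:(lia) Hk). lia.
  - exists N0. intros n k Hn Hk. destruct (Nat.eq_dec n n0) as [->|Hne].
    + rewrite not_finiteStop_stopsAt in Hk by exact Hn0. discriminate.
    + apply (HN0 n k); [lia | exact Hk].
Qed.

Lemma PolSum_closeOn_psi r eps : 0 <= r < 1 -> 0 < eps ->
  exists N0, forall N, (N0 <= N)%nat -> closeOn r eps psi (PolSum N).
Proof.
  intros Hr Heps. set (s := (1 + r) / 2). assert (Hs : 0 <= s < 1) by (unfold s; lra).
  destruct (pow_lt_1_zero s ltac:(rewrite Rabs_pos_eq; lra) (eps * (1 - s))) as [n0 Hn0]; [nra|].
  specialize (Hn0 n0 (le_n n0)). rewrite Rabs_pos_eq in Hn0 by (apply pow_le; lra).
  destruct (stopping_times_bounded n0) as [N0 HN0]. exists N0. intros N HN z Hz.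
  destruct (power_series_geom_bound (fun n => (psi n - PolSum N n)%C) r (s ^ n0) s z Hs)
    as [v [Hv Hvb]]; [| exact Hz |].
  - intros n. destruct (Nat.lt_ge_cases n n0) as [Hlt|Hge].
    + rewrite psi_sub_PolSum_eq0, Cmod_0, Rmult_0_l
        by (intros j Hj; specialize (HN0 n j Hlt Hj); lia).
      apply Rmult_le_pos; apply pow_le; lra.
    + rewrite <- (Rmult_1_l (s ^ n0 * s ^ n)).
      apply Rmult_le_compat; [apply Cmod_ge_0 | apply pow_le; lra | apply psi_sub_PolSum_le1 |].
      apply pow_le_mul_pow; [unfold s; nra | lra | exact Hge].
  - exists v. split; [exact Hv|]. eapply Rle_lt_trans; [exact Hvb|].
    apply (Rmult_lt_reg_r (1 - s)); [lra|]. unfold Rdiv.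
    rewrite Rmult_assoc, Rinv_l, Rmult_1_r by lra. exact Hn0.
Qed.

Lemma psi_inZ : inZ psi.
Proof.
  split.
  - apply coef_bounded_inAD. intros r Hr. apply (coef_bounded_of_bounded psi 1); [|lra].
    intros n. unfold psi.
    destruct (excluded_middle_informative (finiteStop n)); [rewrite Cmod_1 | rewrite Cmod_0]; lra.
  - intros r eps Hr Heps. destruct (PolSum_closeOn_psi r eps Hr Heps) as [N0 HN0].
    exists (PolSum N0). split; [apply span_PolSum | apply HN0; lia].
Qed.

Lemma inZ_Fop_fixed g : inZ g -> Fop g = g -> forall n, g n = (g 1%nat * psi n)%C.
Proof.
  intros Hg HF n. destruct (classic (finiteStop n)) as [Hn|Hn].
  - rewrite psi_finiteStop, Cmult_1_r by exact Hn.
    exact (T_invariant_finiteStop g (Fop_fixed_T_invariant g HF) n Hn).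
  - rewrite psi_not_finiteStop, Cmult_0_r by exact Hn. exact (inZ_not_finiteStop g n Hg Hn).
Qed.

Lemma Copp_eq_self (x : C) : (- x)%C = x -> x = RtoC 0.
Proof. destruct x as [a b]. intros H. injection H as Ha Hb. unfold RtoC. f_equal; lra. Qed.

Lemma inZ_Fop_sub_fixed g : inZ g ->
  Fop (fun n => (Fop g n - g n)%C) = (fun n => (Fop g n - g n)%C) -> Fop g = g.
Proof.
  intros Hg HF. set (h := fun n => (g (T n) - g n)%C).
  assert (HhT : forall n, h (T n) = h n).
  { intros n. pose proof (Fop_fixed_T_invariant _ HF n) as E. cbv beta in E.
    rewrite !Fop_apply in E. exact E. }
  assert (Hh1 : h 1%nat = RtoC 0).
  { apply Copp_eq_self. pose proof (HhT 1%nat) as E. unfold h in E |- *.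
    change (T (T 1)) with 1%nat in E. change (T 1) with 2%nat in *.
    transitivity (g 1%nat - g 2%nat)%C; [ring | exact E]. }
  apply functional_extensionality. intros n. rewrite Fop_apply. apply Ceq_minus.
  change (h n = RtoC 0). destruct (classic (finiteStop n)) as [Hn|Hn].
  - rewrite (T_invariant_finiteStop h HhT n Hn). exact Hh1.
  - unfold h. rewrite (inZ_not_finiteStop g n Hg Hn),
      (inZ_not_finiteStop g (T n) Hg (not_finiteStop_T n Hn)).
    ring.
Qed.

Theorem mainTheorem11 :
  (* Z is invariant under F *)
  (forall f, inZ f -> inZ (Fop f)) /\
  (* action on the Pol_k *)
  Fop (Pol 0) = Pol 1 /\
  Fop (Pol 1) = (fun n => (Pol 0 n + Pol 2 n)%C) /\
  (forall k, (2 <= k)%nat -> Fop (Pol k) = Pol (S k)) /\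
  (* 1 is a simple eigenvalue of F in L(Z) with eigenvector psi *)
  exists psi : coeffs,
    (* psi = sum_{m in N, sigma_infty(m) < oo} z^m *)
    (forall m, finiteStop m -> psi m = RtoC 1) /\
    (forall m, ~ finiteStop m -> psi m = RtoC 0) /\
    (* psi = sum_{k>=0} Pol_k, convergence in A(D) *)
    (forall r eps, 0 <= r < 1 -> 0 < eps ->
       exists N0, forall N, (N0 <= N)%nat -> closeOn r eps psi (PolSum N)) /\
    inZ psi /\ psi <> (fun _ => RtoC 0) /\
    Fop psi = psi /\
    (* geometric multiplicity one *)
    (forall g, inZ g -> Fop g = g -> exists c : C, forall n, g n = (c * psi n)%C) /\
    (* algebraic multiplicity one: ker (F - I)^2 = ker (F - I) on Z *)
    (forall g, inZ g ->
       let h := fun n => (Fop g n - g n)%C in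
       Fop h = h -> Fop g = g).
Proof.
  split; [exact inZ_Fop|].
  split; [exact Fop_Pol0|].
  split; [exact Fop_Pol1|].
  split; [exact Fop_Pol_ge2|].
  exists psi.
  split; [exact psi_finiteStop|].
  split; [exact psi_not_finiteStop|].
  split; [exact PolSum_closeOn_psi|].
  split; [exact psi_inZ|].
  split; [exact psi_neq0|].
  split; [exact Fop_psi|].
  split.
  - intros g Hg HF. exists (g 1%nat). exact (inZ_Fop_fixed g Hg HF).
  - exact inZ_Fop_sub_fixed.
Qed.
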